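(* The distribution of a consistent sequence of exchangeable random permutations $(\boldsymbol\pi_n)_{n\geq1}$ is determined by the following predictive scheme. For any $\pi\in\mathcal S_n$ with $\mathrm{c}(\pi)=(n_1,\dots,n_k)$, if $\sigma^{(j)}\in\mathcal A(\pi)\subset\mathcal S_{n+1}$ is such that $z_{n+1}(\sigma^{(j)})=j$, then $$P(\boldsymbol\pi_{n+1}=\sigma^{(j)}\mid\boldsymbol\pi_n=\pi)=\begin{cases}\frac{1}{n_j}\frac{\varphi_k^{(n+1)}(n_1,\dots,n_j+1,\dots,n_k)}{\varphi_k^{(n)}(n_1,\dots,n_k)}&1\leq j\leq k\\ \frac{\varphi_{k+1}^{(n+1)}(n_1,\dots,n_k,1)}{\varphi_k^{(n)}(n_1,\dots,n_k)}&j=k+1\end{cases}$$ where $(\varphi^{(n)})_{n\geq1}$ is the EPPF of $(\mathrm{z}(\boldsymbol\pi_n))_{n\geq1}$. If $\sigma\notin\mathcal A(\pi)$, then $P(\boldsymbol\pi_{n+1}=\sigma\mid\boldsymbol\pi_n=\pi)=0$.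
   Context: $\mathcal S_n$ is the symmetric group on $[n]$. For $\pi\in\mathcal S_n$, $\mathrm{c}(\pi)$ is its vector of cycle lengths and $\mathrm{z}(\pi)=(z_1(\pi),\dots,z_n(\pi))$ its cycle structure, with $z_i(\pi)$ the ordinal of the cycle containing $i$ (cycles written starting from their least element and ordered by first elements, i.e. labels in order of appearance). The deletion map $\operatorname{del}:\mathcal S_{n+1}\to\mathcal S_n$ is $\operatorname{del}(\sigma)(i)=\sigma(i)$ if $i\neq\sigma^{-1}(n+1)$ and $\operatorname{del}(\sigma)(i)=\sigma(n+1)$ if $i=\sigma^{-1}(n+1)$; $\mathcal A(\pi)=\{\sigma\in\mathcal S_{n+1}:\operatorname{del}(\sigma)=\pi\}$ is the set of the $n+1$ permutations obtained by inserting $n+1$ into the cycle representation of $\pi$ (to the left of any element of an existing cycle, or as a new singleton cycle). A sequence $(\boldsymbol\pi_n)$, $\boldsymbol\pi_n\in\mathcal S_n$, is consistent if $\operatorname{del}(\boldsymbol\pi_{n+1})\overset{d}{=}\boldsymbol\pi_n$; each $\boldsymbol\pi_n$ is exchangeable, i.e. its pmf is $\varphi^{(n)}_k(n_1,\dots,n_k)/\prod_{j=1}^k(n_j-1)!$ for an EPPF $(\varphi^{(n)})$ (symmetric functions satisfying $\varphi^{(1)}_1(1)=1$ and $\varphi_k^{(n)}(n_1,\dots,n_k)=\sum_{j=1}^k\varphi_k^{(n+1)}(n_1,\dots,n_j+1,\dots,n_k)+\varphi_{k+1}^{(n+1)}(n_1,\dots,n_k,1)$), with $(n_1,\dots,n_k)$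 the cycle lengths. *)

From HB Require Import structures.
From mathcomp Require Import all_boot all_order all_algebra all_fingroup.
From mathcomp Require Import all_classical all_reals all_analysis.
Set Implicit Arguments. Unset Strict Implicit. Unset Printing Implicit Defensive.
Import Order.TTheory GRing.Theory Num.Theory.

(* Conventions: [n] = {1,...,n} is encoded by 'I_n = {0,...,n-1};
   the element n+1 of [n+1] is ord_max : 'I_n.+1. *)

Definition del_val n (s : {perm 'I_n.+1}) (i : 'I_n) : 'I_n.+1 :=
  if s (lift ord_max i) == ord_max then s ord_max else s (lift ord_max i).

Definition del_fun n (s : {perm 'I_n.+1}) (i : 'I_n) : 'I_n :=
  odflt i (unlift ord_max (del_val s i)).

Lemma del_val_neq n (s : {perm 'I_n.+1}) i : del_val s i != ord_max.
Proof.
rewrite /del_val; case: ifP => [/eqP E|/negbT //].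
apply/eqP => E'.
have E2 : s (lift ord_max i) = s ord_max by rewrite E E'.
move/perm_inj: E2 => E2.
by move: (neq_lift (@ord_max n) i); rewrite E2 eqxx.
Qed.

Lemma del_val_inj n (s : {perm 'I_n.+1}) : injective (del_val s).
Proof.
move=> i1 i2; rewrite /del_val.
case: ifP => H1; case: ifP => H2.
- move=> _; apply: (@lift_inj _ ord_max); apply: (@perm_inj _ s).
  by rewrite (eqP H1) (eqP H2).
- move/perm_inj => E; exfalso.
  by move: (neq_lift (@ord_max n) i2); rewrite -E eqxx.
- move/perm_inj => E; exfalso.
  by move: (neq_lift (@ord_max n) i1); rewrite E eqxx.
- by move/perm_inj/lift_inj.
Qed.

Lemma lift_del_fun n (s : {perm 'I_n.+1}) i :
  lift ord_max (del_fun s i) = del_val s i.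
Proof.
rewrite /del_fun; case: unliftP (del_val_neq s i) => [j ->|->] //=.
by rewrite eqxx.
Qed.

Lemma del_fun_inj n (s : {perm 'I_n.+1}) : injective (del_fun s).
Proof.
move=> i1 i2 E; apply: (@del_val_inj n s).
by rewrite -!lift_del_fun E.
Qed.

Definition del n (s : {perm 'I_n.+1}) : {perm 'I_n} := perm (@del_fun_inj n s).

Definition Aset n (p : {perm 'I_n}) : {set {perm 'I_n.+1}} :=
  [set s | del s == p].

Definition leader n (p : {perm 'I_n}) (i : 'I_n) : 'I_n :=
  [arg min_(j < i in porbit p i) (j : nat)].

Definition cycmins n (p : {perm 'I_n}) : seq 'I_n :=
  [seq i <- enum 'I_n | leader p i == i].

(* c(pi) : cycle lengths, cycles ordered by their least elements *)
Definition cyclen n (p : {perm 'I_n}) : seq nat :=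
  [seq #|porbit p i| | i <- cycmins p].

(* z_i(pi) : (1-based) ordinal of the cycle containing i *)
Definition zlab n (p : {perm 'I_n}) (i : 'I_n) : nat :=
  (index (leader p i) (cycmins p)).+1.

(* phi n s stands for phi^{(n)}_{size s}(s) *)
Definition composition (n : nat) (s : seq nat) : bool :=
  all (fun m => 0 < m)%N s && (sumn s == n).

Definition is_EPPF (R : realType) (phi : nat -> seq nat -> R) : Prop :=
  [/\ phi 1%N [:: 1%N] = 1%R,
      (forall n s t, composition n s -> perm_eq s t -> phi n s = phi n t) &
      (forall n s, (0 < n)%N -> composition n s ->
         phi n s = \sum_(j < size s) phi n.+1 (incr_nth s j)
                   + phi n.+1 (rcons s 1%N))%R].

Local Open Scope classical_set_scope.
Local Open Scope ring_scope.

Definition condP d (T : measurableType d) (R : realType) (P : probability T R)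
  (A B : set T) : R := fine (P (A `&` B)) / fine (P B).

(* Since pi_n = del pi_(n+1) almost surely, P(pi_(n+1) = s | pi_n = p) vanishes
   unless del s = p, and is otherwise the ratio of the two exchangeable pmfs.
   Inserting n+1 into p either opens a new singleton cycle, labelled k+1, so
   c(s) = (c(p), 1) and the weights prod (n_i - 1)! agree; or it enters the
   cycle labelled j, so c(s) increments n_j and the weight gains the factor
   n_j. *)

From HB Require Import structures.
From mathcomp Require Import all_boot all_order all_algebra all_fingroup.
From mathcomp Require Import all_classical all_reals all_analysis.
From mathcomp Require Import ring.
Set Implicit Arguments. Unset Strict Implicit. Unset Printing Implicit Defensive.
Import Order.TTheory GRing.Theory Num.Theory.

Section PermOrbit.
Variables (T : finType) (s : {perm T}).

Lemma porbit_self_image x : s x \in porbit s x.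
Proof. by have := mem_porbit s 1 x; rewrite expg1. Qed.

Lemma porbit_trans x y z :
  y \in porbit s x -> z \in porbit s y -> z \in porbit s x.
Proof. by rewrite -eq_porbit_mem => /eqP ->. Qed.

Lemma porbit_sub_closed (S : {set T}) x :
  x \in S -> {in S, forall y, s y \in S} -> porbit s x \subset S.
Proof.
move=> xS sS; apply/fintype.subsetP => y /porbitP [m ->]; rewrite permX.
by elim: m => //= m IH; apply: sS.
Qed.

End PermOrbit.

Section Leader.
Variables (n : nat) (q : {perm 'I_n}).

Lemma leader_porbit i : leader q i \in porbit q i.
Proof. by rewrite /leader; case: arg_minnP => //; exact: porbit_id. Qed.

Lemma leader_min i j : j \in porbit q i -> (leader q i <= j)%N.
Proof.
by rewrite /leader; case: arg_minnP => [|l _ lmin]; [exact: porbit_id | exact: lmin].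
Qed.

Lemma leader_unique i j :
  j \in porbit q i -> (forall k, k \in porbit q i -> (j <= k)%N) -> leader q i = j.
Proof.
move=> ji jmin; apply/val_inj/eqP; rewrite eqn_leq leader_min //=.
exact: jmin (leader_porbit i).
Qed.

Lemma eq_leader i j : porbit q i = porbit q j -> leader q i = leader q j.
Proof.
move=> E; apply: leader_unique => [|k]; rewrite E ?leader_porbit //.
exact: leader_min.
Qed.

Lemma porbit_leader i : porbit q (leader q i) = porbit q i.
Proof. by apply/eqP; rewrite eq_porbit_mem leader_porbit. Qed.

Lemma leader_id i : leader q (leader q i) = leader q i.
Proof. by apply: eq_leader; rewrite porbit_leader. Qed.

Lemma leader_cycmins i : leader q i \in cycmins q.
Proof. by rewrite mem_filter leader_id eqxx mem_enum. Qed.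

Lemma cycmins_uniq : uniq (cycmins q).
Proof. by rewrite filter_uniq ?enum_uniq. Qed.

Lemma mem_porbit_cycmins i a :
  i \in cycmins q -> (a \in porbit q i) = (i == leader q a).
Proof.
rewrite mem_filter => /andP [/eqP li _]; apply/idP/eqP => [ai|->].
  by rewrite -li; apply: eq_leader; apply/eqP; rewrite eq_porbit_mem porbit_sym.
by rewrite porbit_sym leader_porbit.
Qed.

Lemma cyclen_gt0 : all (fun m => 0 < m)%N (cyclen q).
Proof. by apply/allP => m /mapP [i _ ->]; rewrite lt0n card_porbit_neq0. Qed.

End Leader.

Lemma prod_fact_incr_nth (c : seq nat) j : (j < size c)%N -> (0 < nth 0 c j)%N ->
  (\prod_(m <- incr_nth c j) m.-1`! = (\prod_(m <- c) m.-1`!) * nth 0 c j)%N.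
Proof.
elim: c j => [|m c IH] [|j] //=; rewrite !big_cons.
  by case: m => // m _ _; rewrite factS [RHS]mulnC mulnA.
by move=> jc cj; rewrite IH // mulnA.
Qed.

Lemma map_incr_index (T : eqType) (f : T -> nat) (r : seq T) (a : T) :
  uniq r -> a \in r ->
  [seq f i + (i == a) | i <- r] = incr_nth (map f r) (index a r).
Proof.
elim: r => //= x r IH /andP [xr ur]; rewrite inE.
case: eqVneq => [-> _ | xa /= ar]; last by rewrite addn0 IH.
rewrite addn1; congr (_ :: _); apply/eq_in_map => i ir.
by rewrite (negbTE (memPn xr i ir)) addn0.
Qed.

Section DeleteMax.
Variables (n : nat) (s : {perm 'I_n.+1}).
Local Notation p := (del s).
Local Notation lf := (lift ord_max).

Lemma lift_del i :
  lf (p i) = if s (lf i) == ord_max then s ord_max else s (lf i).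
Proof. by rewrite /del permE lift_del_fun. Qed.

Lemma lift_del_porbit i : lf (p i) \in porbit s (lf i).
Proof.
rewrite lift_del; case: eqP => [smax|_]; last exact: porbit_self_image.
by have := mem_porbit s 2 (lf i); rewrite expgS expg1 permM smax.
Qed.

Lemma lift_porbit_del i j : j \in porbit p i -> lf j \in porbit s (lf i).
Proof.
case/porbitP => m ->; rewrite permX; elim: m => [|m IH] /=; first exact: porbit_id.
exact: porbit_trans IH (lift_del_porbit _).
Qed.

Definition cycle_hits_max i := [exists z in porbit p i, s (lf z) == ord_max].

Lemma porbit_lift i : porbit s (lf i) =
  lf @: porbit p i :|: [set x | (x == ord_max) && cycle_hits_max i].
Proof.
apply/eqP; rewrite finset.eqEsubset; apply/andP; split; last first.
  apply/fintype.subsetP => y; rewrite !inE => /orP [/imsetP [z zi ->]|].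
    exact: lift_porbit_del.
  case/andP => /eqP -> /existsP [z /andP [zi /eqP szmax]].
  by have := porbit_trans (lift_porbit_del zi) (porbit_self_image s _); rewrite szmax.
apply: porbit_sub_closed; first by rewrite inE imset_f ?porbit_id.
move=> y; rewrite !inE => /orP [/imsetP [z zi ->]|].
  have := lift_del z; case: eqP => [smax _|_ <-].
    by rewrite smax; apply/orP; right; apply/existsP; exists z; rewrite zi smax eqxx.
  by rewrite imset_f // (porbit_trans zi) ?porbit_self_image.
case/andP => /eqP -> /existsP [z /andP [zi /eqP smax]].
have := lift_del z; rewrite smax eqxx => <-.
by rewrite imset_f // (porbit_trans zi) ?porbit_self_image.
Qed.

Lemma card_porbit_lift i :
  #|porbit s (lf i)| = #|porbit p i| + cycle_hits_max i.
Proof.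
rewrite porbit_lift cardsU card_imset; last exact: lift_inj.
have -> : lf @: porbit p i :&: [set x | (x == ord_max) && cycle_hits_max i] = finset.set0.
  apply/setP => x; rewrite !inE; apply/negbTE; apply/andP => [[/imsetP [z _ ->]]].
  by rewrite eq_sym (negbTE (neq_lift _ _)).
rewrite cards0 subn0; congr (_ + _); case: (cycle_hits_max i).
  by rewrite (_ : [set x | _] = [set ord_max]) ?cards1 //; apply/setP => x; rewrite !inE andbT.
by apply/eqP; rewrite cards_eq0; apply/eqP/setP => x; rewrite !inE andbF.
Qed.

Lemma leader_lift i : leader s (lf i) = lf (leader p i).
Proof.
apply: leader_unique; first exact/lift_porbit_del/leader_porbit.
move=> k; rewrite porbit_lift !inE => /orP [/imsetP [z zi ->]|/andP [/eqP -> _]].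
  by rewrite !lift_max leader_min.
by rewrite lift_max /= ltnW.
Qed.

Lemma cycmins_lift : cycmins s =
  map lf (cycmins p) ++ [seq x <- [:: ord_max] | leader s x == x].
Proof.
have enum_lift : enum 'I_n.+1 = rcons (map lf (enum 'I_n)) ord_max.
  by rewrite enum_ordSr; congr rcons; apply: eq_map => i; apply/val_inj/esym/lift_max.
rewrite /cycmins enum_lift -cats1 filter_cat filter_map; congr (map _ _ ++ _).
by apply: eq_filter => i /=; rewrite leader_lift (inj_eq lift_inj).
Qed.

Section FixedMax.
Hypothesis s_max : s ord_max = ord_max.

Lemma porbit_max_fixed : porbit s ord_max = [set ord_max].
Proof.
apply/eqP; rewrite finset.eqEsubset finset.sub1set porbit_id andbT.
by apply: porbit_sub_closed; rewrite ?inE // => y /set1P ->; rewrite s_max inE.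
Qed.

Lemma leader_max_fixed : leader s ord_max = ord_max.
Proof. by apply: leader_unique; rewrite ?porbit_id // porbit_max_fixed => k /set1P ->. Qed.

Lemma cycle_hits_max_fixed i : cycle_hits_max i = false.
Proof.
apply/negbTE/existsP => [[z /andP [_ /eqP szmax]]].
have /perm_inj/eqP : s (lf z) = s ord_max by rewrite szmax s_max.
by rewrite eq_sym (negbTE (neq_lift _ _)).
Qed.

Lemma cycmins_fixed : cycmins s = rcons (map lf (cycmins p)) ord_max.
Proof. by rewrite cycmins_lift /= leader_max_fixed eqxx cats1. Qed.

Lemma cyclen_fixed : cyclen s = rcons (cyclen p) 1%N.
Proof.
rewrite /cyclen cycmins_fixed map_rcons porbit_max_fixed cards1 -map_comp.
by congr rcons; apply: eq_map => i /=; rewrite card_porbit_lift cycle_hits_max_fixed addn0.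
Qed.

Lemma zlab_max_fixed : zlab s ord_max = (size (cyclen p)).+1.
Proof.
rewrite /zlab leader_max_fixed cycmins_fixed -cats1 index_cat /= eqxx addn0.
rewrite !size_map ifN //; apply/mapP => -[z _ /eqP].
by rewrite (negbTE (neq_lift _ _)).
Qed.

End FixedMax.

Section MovedMax.
Variable a : 'I_n.
Hypothesis s_a : s (lf a) = ord_max.

Lemma leader_max_moved : leader s ord_max = lf (leader p a).
Proof.
rewrite -leader_lift; apply: eq_leader; apply/eqP.
by rewrite eq_porbit_mem -{1}s_a porbit_self_image.
Qed.

Lemma cycle_hits_max_moved i : cycle_hits_max i = (a \in porbit p i).
Proof.
apply/existsP/idP => [[z /andP [zi /eqP szmax]]|ai]; last by exists a; rewrite ai s_a eqxx.
have /perm_inj/lift_inj <- : s (lf z) = s (lf a) by rewrite szmax s_a.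
exact: zi.
Qed.

Lemma cycmins_moved : cycmins s = map lf (cycmins p).
Proof.
by rewrite cycmins_lift /= leader_max_moved eq_sym (negbTE (neq_lift _ _)) cats0.
Qed.

Lemma zlab_max_moved : zlab s ord_max = (index (leader p a) (cycmins p)).+1.
Proof. by rewrite /zlab leader_max_moved cycmins_moved index_map //; exact: lift_inj. Qed.

Lemma cyclen_moved : cyclen s = incr_nth (cyclen p) (zlab s ord_max).-1.
Proof.
rewrite zlab_max_moved /= -map_incr_index ?cycmins_uniq ?leader_cycmins //.
rewrite /cyclen cycmins_moved -map_comp; apply/eq_in_map => i ic /=.
by rewrite card_porbit_lift cycle_hits_max_moved mem_porbit_cycmins.
Qed.

Lemma zlab_max_moved_le : (zlab s ord_max <= size (cyclen p))%N.
Proof. by rewrite zlab_max_moved size_map index_mem leader_cycmins. Qed.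

End MovedMax.

Lemma cyclen_del_cases :
  zlab s ord_max = (size (cyclen p)).+1 /\ cyclen s = rcons (cyclen p) 1%N
  \/ (zlab s ord_max <= size (cyclen p))%N
     /\ cyclen s = incr_nth (cyclen p) (zlab s ord_max).-1.
Proof.
case: (unliftP ord_max ((s^-1)%g ord_max)) => [a|] s_max; [right | left].
  have s_a : s (lf a) = ord_max by rewrite -s_max permKV.
  by rewrite (zlab_max_moved_le s_a) (cyclen_moved s_a).
have s_fix : s ord_max = ord_max by rewrite -{1}s_max permKV.
by rewrite zlab_max_fixed // cyclen_fixed.
Qed.

End DeleteMax.

Local Open Scope classical_set_scope.
Local Open Scope ring_scope.

Lemma subsetC_prob1_measure0 d (T : measurableType d) (R : realType)
    (P : probability T R) (E G : set T) :
  measurable E -> measurable G -> P G = 1%E -> E `<=` (~` G)%classic -> P E = 0%E.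
Proof.
move=> mE mG PG1 EG; apply: (subset_measure0 mE (measurableC mG) EG).
by have := probability_setC P mG; rewrite PG1 subee.
Qed.

Section ConditionalOnConsistent.
Variables (d : measure_display) (T : measurableType d) (R : realType).
Variables (P : probability T R) (A B : finType).
Variables (Y : T -> A) (Z : T -> B) (f : B -> A).
Hypothesis mY : forall a, measurable (Y @^-1` [set a]).
Hypothesis mZ : forall b, measurable (Z @^-1` [set b]).
Hypothesis YfZ : P [set w | Y w = f (Z w)] = 1%E.

Lemma measurable_consistent : measurable [set w | Y w = f (Z w)].
Proof.
have -> : [set w | Y w = f (Z w)] =
    \bigcup_(b in [set: B]) (Z @^-1` [set b] `&` Y @^-1` [set f b]).
  apply/seteqP; split => w /=; first by exists (Z w).
  by case=> b _ [/= -> ->].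
apply: fin_bigcup_measurable; first exact: finite_finset.
by move=> b _; apply: measurableI.
Qed.

Lemma condP_consistent b a :
  condP P (Z @^-1` [set b]) (Y @^-1` [set a]) =
  if f b == a then fine (P (Z @^-1` [set b])) / fine (P (Y @^-1` [set a]))
  else 0.
Proof.
set Zb := Z @^-1` [set b]; set Ya := Y @^-1` [set a].
have mZb : measurable Zb := mZ b; have mYa : measurable Ya := mY a.
have null E : measurable E -> E `<=` [set w | Y w <> f (Z w)] -> P E = 0%E.
  by move=> mE EG; apply: subsetC_prob1_measure0 mE measurable_consistent YfZ _.
rewrite /condP; case: eqP => [fba|fba].
  have -> : P Zb = (P (Zb `\` Ya) + P (Zb `&` Ya))%E by exact: measureDI.
  rewrite [P (Zb `\` Ya)]null ?add0e //; first exact: measurableD.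
  by move=> w [/= -> Yw]; rewrite fba.
have -> : P (Zb `&` Ya) = 0%E.
  by apply: null => [|w [/= -> ->] /esym]; first exact: measurableI.
by rewrite /= mul0r.
Qed.

End ConditionalOnConsistent.

Unset Implicit Arguments.

Theorem proposition3 (d : measure_display) (T : measurableType d)
  (R : realType) (P : probability T R)
  (X : forall n : nat, T -> {perm 'I_n}) (phi : nat -> seq nat -> R) :
  (* each pi_n is a random variable (n >= 1) *)
  (forall n : nat, (0 < n)%N ->
     forall p : {perm 'I_n}, measurable (X n @^-1` [set p])) ->
  (* consistency: pi_n = del(pi_{n+1}) almost surely *)
  (forall n : nat, (0 < n)%N ->
     P [set w | X n w = del (X n.+1 w)] = 1%E) ->
  (* exchangeability with EPPF phi *)
  is_EPPF phi ->
  (forall n : nat, (0 < n)%N -> forall p : {perm 'I_n},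
     fine (P (X n @^-1` [set p]))
       = phi n (cyclen p) / (\prod_(m <- cyclen p) (m.-1)`!)%:R) ->
  (* predictive scheme *)
  forall (n : nat) (p : {perm 'I_n}), (0 < n)%N ->
  0 < fine (P (X n @^-1` [set p])) ->
  let c := cyclen p in
  let k := size c in
  let cond (s : {perm 'I_n.+1}) :=
    condP P (X n.+1 @^-1` [set s]) (X n @^-1` [set p]) in
  [/\ forall (j : nat) (s : {perm 'I_n.+1}), s \in Aset p ->
        zlab s ord_max = j -> (1 <= j <= k)%N ->
        cond s = (nth 0%N c j.-1)%:R^-1
                 * (phi n.+1 (incr_nth c j.-1) / phi n c),
      forall s : {perm 'I_n.+1}, s \in Aset p -> zlab s ord_max = k.+1 ->
        cond s = phi n.+1 (rcons c 1%N) / phi n c &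
      forall s : {perm 'I_n.+1}, s \notin Aset p -> cond s = 0].
Proof.
move=> mX consistent _ exch n p n_gt0 Pp_gt0 c k cond.
pose F (l : seq nat) : R := (\prod_(m <- l) m.-1`!)%:R.
have F_neq0 l : F l != 0.
  by rewrite pnatr_eq0 -lt0n prodn_gt0 // => m; rewrite fact_gt0.
have phi_neq0 : phi n c != 0.
  by apply: contraTneq Pp_gt0 => phi0; rewrite exch // -/c phi0 mul0r ltxx.
have condE s : cond s = if del s == p then
    fine (P (X n.+1 @^-1` [set s])) / fine (P (X n @^-1` [set p])) else 0.
  exact: (condP_consistent (mX n n_gt0) (mX n.+1 isT) (consistent n n_gt0)).
have cond_ratio s : del s = p ->
    cond s = phi n.+1 (cyclen s) / phi n c * (F c / F (cyclen s)).
  move=> del_s; rewrite condE del_s eqxx !exch // -/c -/(F c) -/(F (cyclen s)).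
  by field; rewrite !F_neq0 phi_neq0.
split => [j s | s | s]; rewrite inE; last by move/negbTE; rewrite condE => ->.
- move=> /eqP del_s zj /andP [j_gt0 j_le].
  have := cyclen_del_cases s; rewrite del_s -/c -/k zj.
  case=> [[j_eq _] | [_ cyc]]; first by move: j_le; rewrite j_eq ltnn.
  have j_lt : (j.-1 < k)%N by rewrite prednK.
  have cj_gt0 : (0 < nth 0 c j.-1)%N by exact: (all_nthP 0 (cyclen_gt0 p)).
  rewrite cond_ratio // cyc /F prod_fact_incr_nth // natrM -/(F c).
  by field; rewrite F_neq0 phi_neq0 pnatr_eq0 -lt0n cj_gt0.
- move=> /eqP del_s zk.
  have := cyclen_del_cases s; rewrite del_s -/c -/k zk.
  case=> [[_ cyc] | [k_lt _]]; last by rewrite ltnn in k_lt.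
  rewrite cond_ratio // cyc /F -cats1 big_cat big_seq1 /= muln1 -/(F c).
  by field; rewrite F_neq0 phi_neq0.
Qed.
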